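(* Let $E$, $D$, $S$ be binary random variables taking values in $\{0,1\}$ such that every joint cell probability $P(E=e,D=d,S=s)$ is positive, and write $p(d,e)=P(S=1\mid D=d,E=e)$. Suppose there is no interaction of $E$ and $D$ on $S$ on the odds ratio scale, i.e. $\mathrm{OR}_{ES\mid D=1}=\mathrm{OR}_{ES\mid D=0}$. (a) If $p(d,e)$ is non-decreasing in both $d$ and $e$, or non-increasing in both $d$ and $e$, then $\mathrm{OR}_{ED\mid S=1}\le \mathrm{OR}_{ED}$. (b) If $p(d,e)$ is non-decreasing in one of $d,e$ and non-increasing in the other, then $\mathrm{OR}_{ED\mid S=1}\ge \mathrm{OR}_{ED}$.
   Context: For binary random variables $A,B$ and a random variable $C$, $\mathrm{OR}_{AB\mid C=c}=\frac{P(A=1,B=1\mid C=c)P(A=0,B=0\mid C=c)}{P(A=1,B=0\mid C=c)P(A=0,B=1\mid C=c)}$, and $\mathrm{OR}_{AB}$ is the unconditional version. ''Non-decreasing in $d$'' means $p(1,e)\ge p(0,e)$ for each $e\in\{0,1\}$; ''non-decreasing in $e$'' means $p(d,1)\ge p(d,0)$ for each $d\in\{0,1\}$; non-increasing analogously. *)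

From mathcomp Require Import all_boot all_order all_algebra.
Set Implicit Arguments. Unset Strict Implicit. Unset Printing Implicit Defensive.
Import Order.TTheory GRing.Theory Num.Theory.
Local Open Scope ring_scope.

(* A joint distribution of three binary random variables (E, D, S), values
   {0,1} encoded as bool (false = 0, true = 1):  q e d s = P(E=e, D=d, S=s). *)
Definition is_joint3 (R : realFieldType) (q : bool -> bool -> bool -> R) : Prop :=
  (forall e d s, 0 < q e d s) /\
  \sum_(e : bool) \sum_(d : bool) \sum_(s : bool) q e d s = 1.

Definition OR (R : realFieldType) (f : bool -> bool -> R) : R :=
  (f true true * f false false) / (f true false * f false true).

Definition PD (R : realFieldType) (q : bool -> bool -> bool -> R) (d : bool) : R :=
  \sum_(e : bool) \sum_(s : bool) q e d s.
Definition PS (R : realFieldType) (q : bool -> bool -> bool -> R) (s : bool) : R :=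
  \sum_(e : bool) \sum_(d : bool) q e d s.

Definition OR_ES_given_D (R : realFieldType) (q : bool -> bool -> bool -> R) (d : bool) : R :=
  OR (fun e s => q e d s / PD q d).
Definition OR_ED_given_S (R : realFieldType) (q : bool -> bool -> bool -> R) (s : bool) : R :=
  OR (fun e d => q e d s / PS q s).
Definition OR_ED (R : realFieldType) (q : bool -> bool -> bool -> R) : R :=
  OR (fun e d => \sum_(s : bool) q e d s).

Definition pS (R : realFieldType) (q : bool -> bool -> bool -> R) (d e : bool) : R :=
  q e d true / (\sum_(s : bool) q e d s).

Definition nondecr_d (R : realFieldType) (p : bool -> bool -> R) : Prop :=
  forall e, p false e <= p true e.
Definition nondecr_e (R : realFieldType) (p : bool -> bool -> R) : Prop :=
  forall d, p d false <= p d true.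
Definition nonincr_d (R : realFieldType) (p : bool -> bool -> R) : Prop :=
  forall e, p true e <= p false e.
Definition nonincr_e (R : realFieldType) (p : bool -> bool -> R) : Prop :=
  forall d, p d true <= p d false.

From mathcomp Require Import all_boot all_order all_algebra.
From mathcomp Require Import ring lra.
Import Order.TTheory GRing.Theory Num.Theory.
Local Open Scope ring_scope.

(* Let o(d,e) = P(S=1 | d,e) / P(S=0 | d,e) be the odds of S.  The table
   P(E=e, D=d, S=1) is the table P(E=e, D=d, S=0) reweighted cellwise by o,
   and P(E=e, D=d) is it reweighted by 1 + o.  Odds ratios are multiplicative
   in cellwise products, and no interaction on the odds ratio scale says
   exactly OR(o) = 1; hence OR_{ED|S=1} = OR_{ED|S=0} and
   OR_{ED} = OR(1 + o) * OR_{ED|S=0}.  Under OR(o) = 1, OR(1 + o) compares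
   with 1 as o(1,0) + o(0,1) compares with o(1,1) + o(0,0), and when the
   product of a diagonal equals that of the antidiagonal the diagonal holding
   the largest entry has the larger sum.  Monotonicity of p locates that
   largest entry, since o is an increasing function of p. *)

Section OddsRatioAlgebra.
Context {R : realFieldType}.
Implicit Types f g p : bool -> bool -> R.

Lemma ORM f g : OR (fun a b => f a b * g a b) = OR f * OR g.
Proof. by rewrite /OR !invfM; ring. Qed.

Lemma OR_cst (c : R) : c != 0 -> OR (fun _ _ => c) = 1.
Proof. by move=> c0; rewrite /OR divff // mulf_neq0. Qed.

Lemma OR_divr f (c : R) : c != 0 -> OR (fun a b => f a b / c) = OR f.
Proof. by move=> c0; rewrite ORM OR_cst ?invr_eq0 // mulr1. Qed.

Lemma eq_OR {f g} : (forall a b, f a b = g a b) -> OR f = OR g.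
Proof. by move=> fg; rewrite /OR !fg. Qed.

Lemma OR_tr f : OR (fun a b => f b a) = OR f.
Proof. by rewrite /OR [X in _ / X]mulrC. Qed.

Lemma OR_ratio f :
  OR f = (f true true / f true false) / (f false true / f false false).
Proof. by rewrite /OR !invfM !invrK; ring. Qed.

Lemma OR_gt0 f : (forall a b, 0 < f a b) -> 0 < OR f.
Proof. by move=> f_gt0; rewrite /OR !(divr_gt0, mulr_gt0). Qed.

Lemma addr_le_extreme (a b c d : R) : 0 < a -> a * d = b * c ->
  b <= a -> c <= a -> b + c <= a + d.
Proof. by move=> *; nra. Qed.

Lemma OR_add1_ge1 f : (forall a b, 0 < f a b) -> OR f = 1 ->
  f true false + f false true <= f true true + f false false ->
  1 <= OR (fun a b => 1 + f a b).
Proof.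
move=> f_gt0 /divr1_eq cross le_sum.
rewrite /OR ler_pdivlMr ?mul1r ?mulr_gt0 ?addr_gt0 //.
nra.
Qed.

Lemma OR_add1_le1 f : (forall a b, 0 < f a b) -> OR f = 1 ->
  f true true + f false false <= f true false + f false true ->
  OR (fun a b => 1 + f a b) <= 1.
Proof.
move=> f_gt0 /divr1_eq cross le_sum.
rewrite /OR ler_pdivrMr ?mul1r ?mulr_gt0 ?addr_gt0 //.
nra.
Qed.

Lemma OR_add1_ge1_comonotone f p : (forall a b, 0 < f a b) -> OR f = 1 ->
  (forall a b a' b', p a b <= p a' b' -> f a b <= f a' b') ->
  (nondecr_d p /\ nondecr_e p) \/ (nonincr_d p /\ nonincr_e p) ->
  1 <= OR (fun a b => 1 + f a b).
Proof.
move=> f_gt0 OR1 pf mono; apply: OR_add1_ge1 => //.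
have cross := divr1_eq OR1.
case: mono => [[pd pe]|[pd pe]].
- exact: addr_le_extreme (f_gt0 _ _) cross
    (pf _ _ _ _ (pe true)) (pf _ _ _ _ (pd true)).
- rewrite [X in _ <= X]addrC.
  apply: addr_le_extreme (f_gt0 _ _) _
    (pf _ _ _ _ (pd false)) (pf _ _ _ _ (pe false)).
  by rewrite mulrC cross.
Qed.

Lemma OR_add1_le1_comonotone f p : (forall a b, 0 < f a b) -> OR f = 1 ->
  (forall a b a' b', p a b <= p a' b' -> f a b <= f a' b') ->
  (nondecr_d p /\ nonincr_e p) \/ (nonincr_d p /\ nondecr_e p) ->
  OR (fun a b => 1 + f a b) <= 1.
Proof.
move=> f_gt0 OR1 pf mono; apply: OR_add1_le1 => //.
have cross := divr1_eq OR1.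
case: mono => [[pd pe]|[pd pe]].
- apply: addr_le_extreme (f_gt0 _ _) _
    (pf _ _ _ _ (pe true)) (pf _ _ _ _ (pd false)).
  by rewrite -cross.
- rewrite [X in _ <= X]addrC.
  apply: addr_le_extreme (f_gt0 _ _) _
    (pf _ _ _ _ (pd true)) (pf _ _ _ _ (pe false)).
  by rewrite mulrC -cross.
Qed.

Lemma ler_odds_prob (x y x' y' : R) : 0 < x -> 0 < y -> 0 < x' -> 0 < y' ->
  x / (x + y) <= x' / (x' + y') -> x / y <= x' / y'.
Proof.
move=> x_gt0 y_gt0 x'_gt0 y'_gt0.
rewrite ler_pdivlMr ?addr_gt0 // mulrAC ler_pdivrMr ?addr_gt0 // => le_prob.
by rewrite ler_pdivlMr // mulrAC ler_pdivrMr //; nra.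
Qed.

End OddsRatioAlgebra.

(* Indexed (d, e), like [pS q]. *)
Definition oddsS {R : realFieldType} (q : bool -> bool -> bool -> R) d e : R :=
  q e d true / q e d false.

Section BinaryTriple.
Context {R : realFieldType} {q : bool -> bool -> bool -> R}.
Hypothesis q_gt0 : forall e d s, 0 < q e d s.

Lemma oddsS_gt0 d e : 0 < oddsS q d e.
Proof. exact: divr_gt0. Qed.

Lemma le_pS_oddsS d e d' e' :
  pS q d e <= pS q d' e' -> oddsS q d e <= oddsS q d' e'.
Proof. by rewrite /pS !big_bool; apply: ler_odds_prob. Qed.

Lemma OR_ES_given_D_oddsS d :
  OR_ES_given_D q d = oddsS q d true / oddsS q d false.
Proof.
have PD_gt0 : 0 < PD q d by rewrite /PD !big_bool !addr_gt0.
by rewrite /OR_ES_given_D OR_divr ?gt_eqF // OR_ratio.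
Qed.

Lemma OR_oddsS_eq1 :
  OR_ES_given_D q true = OR_ES_given_D q false -> OR (oddsS q) = 1.
Proof.
move=> no_interaction; rewrite OR_ratio -!OR_ES_given_D_oddsS no_interaction.
by rewrite divff // OR_ES_given_D_oddsS gt_eqF ?divr_gt0 ?oddsS_gt0.
Qed.

Lemma q_true_oddsS e d : q e d true = oddsS q d e * q e d false.
Proof. by rewrite divfK ?gt_eqF. Qed.

Lemma OR_ED_given_S1_oddsS :
  OR_ED_given_S q true = OR (oddsS q) * OR (fun e d => q e d false).
Proof.
have PS_gt0 : 0 < PS q true by rewrite /PS !big_bool !addr_gt0.
rewrite /OR_ED_given_S OR_divr ?gt_eqF // (eq_OR q_true_oddsS).
by rewrite ORM (OR_tr (oddsS q)).
Qed.

Lemma OR_ED_oddsS :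
  OR_ED q = OR (fun d e => 1 + oddsS q d e) * OR (fun e d => q e d false).
Proof.
rewrite /OR_ED (eq_OR (g := fun e d => (1 + oddsS q d e) * q e d false)).
  by rewrite ORM (OR_tr (fun d e => 1 + oddsS q d e)).
by move=> e d; rewrite big_bool q_true_oddsS mulrDl mul1r addrC.
Qed.

End BinaryTriple.

Theorem mainTheorem2 (R : realFieldType) (q : bool -> bool -> bool -> R) :
  is_joint3 q ->
  OR_ES_given_D q true = OR_ES_given_D q false ->
  (((nondecr_d (pS q) /\ nondecr_e (pS q)) \/ (nonincr_d (pS q) /\ nonincr_e (pS q))) ->
     OR_ED_given_S q true <= OR_ED q) /\
  (((nondecr_d (pS q) /\ nonincr_e (pS q)) \/ (nonincr_d (pS q) /\ nondecr_e (pS q))) ->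
     OR_ED q <= OR_ED_given_S q true).
Proof.
case=> q_gt0 _ no_interaction.
have OR_oddsS1 := OR_oddsS_eq1 q_gt0 no_interaction.
have OR_S0_gt0 : 0 < OR (fun e d => q e d false) by apply: OR_gt0.
rewrite OR_ED_given_S1_oddsS // OR_ED_oddsS // OR_oddsS1 mul1r.
split=> mono.
- rewrite ler_pMl //.
  exact: OR_add1_ge1_comonotone (oddsS_gt0 q_gt0) _ (le_pS_oddsS q_gt0) mono.
- rewrite ger_pMl //.
  exact: OR_add1_le1_comonotone (oddsS_gt0 q_gt0) _ (le_pS_oddsS q_gt0) mono.
Qed.
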